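(* Let $\alpha>-1$, $d\in\widetilde{D}$ (with the convention $d_{-1}=0$), $p=(L_n^{(\alpha+1)})_{n\in\mathbb{N}_0}$, $q=(L_n^{(\alpha)})_{n\in\mathbb{N}_0}$, and let $T=E_{p,d}$ be regarded as an operator in $H(q)$ with domain $\mathcal{P}_c$. For $g=\sum_kg_kq_k\in H(q)$: (i) $g\in D(T^* )$ iff $\sum_{k=0}^\infty\left|g_k\bar d_k+(\bar d_k-\bar d_{k-1})\sum_{t=0}^{k-1}g_t\right|^2<\infty$; (ii) for $g\in D(T^* )$, $T^*g=\sum_{k=0}^\infty\left(g_k\bar d_k+(\bar d_k-\bar d_{k-1})\sum_{t=0}^{k-1}g_t\right)q_k$; (iii) for $s\in\mathbb{N}_0$, $q_s\in D(T^* )$ iff $(\bar d_k-\bar d_{k-1})_{k\in\mathbb{N}_0}\in\ell_2$; (iv) if $(\bar d_k-\bar d_{k-1})_{k\in\mathbb{N}_0}\in\ell_2$, then $T$ is closable and (a) $g\in D(\overline{T})$ iff $\sum_{s=0}^\infty\left|g_sd_s+\sum_{k=s+1}^\infty(d_k-d_{k-1})g_k\right|^2<\infty$, (b) for $g\in D(\overline{T})$, $\overline{T}g=\sum_{s=0}^\infty\left(g_sd_s+\sum_{k=s+1}^\infty(d_k-d_{k-1})g_k\right)q_s$.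
   Context: $\mathcal{P}_c$ is the space of polynomials in one real variable with complex coefficients. For $\beta>-1$, $L_n^{(\beta)}(x)=\sum_{k=0}^n\frac{(-1)^k}{k!}\binom{n+\beta}{n-k}x^k$ is the generalized Laguerre polynomial. For a sequence $Q=(Q_n)$ of polynomials with $\deg Q_n=n$, $H(Q)$ is the completion of $\mathcal{P}_c$ with respect to the inner product making $(Q_n)$ orthonormal (so here the unnormalized $L_n^{(\alpha)}$ are orthonormal); $g\in H(Q)$ is written $g=\sum_kg_kQ_k$, $(g_k)\in\ell_2$. $\widetilde{D}$ is the set of non-constant sequences of non-zero complex numbers. For a polynomial sequence $p$ and $d\in\widetilde{D}$, $E_{p,d}$ is the linear map on $\mathcal{P}_c$ with $E_{p,d}(p_n)=d_np_n$. $T^*$ denotes the adjoint and $\overline{T}$ the closure. *)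

From HB Require Import structures.
From mathcomp Require Import all_boot all_order all_algebra.
From mathcomp Require Import all_classical all_reals all_analysis.
From mathcomp Require Import complex.
Set Implicit Arguments. Unset Strict Implicit. Unset Printing Implicit Defensive.
Import Order.TTheory GRing.Theory Num.Theory.
Import numFieldNormedType.Exports.
Local Open Scope classical_set_scope.
Local Open Scope ring_scope.

Section Defs.
Variable R : realType.
Local Notation C := R[i].

Definition sqn (z : C) : R := complex.Re z ^+ 2 + complex.Im z ^+ 2.

Definition l2 (a : nat -> C) : Prop := cvgn (series (fun k => sqn (a k))).

(* squared l_2 norm (meaningful for a in l_2) *)
Definition l2norm2 (a : nat -> C) : R := limn (series (fun k => sqn (a k))).

Definition csum (u : nat -> C) : C :=
  ((limn (series (fun k => complex.Re (u k)))) +i* (limn (series (fun k => complex.Im (u k)))))%C.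

Definition ip (a b : nat -> C) : C := csum (fun k => a k * (b k)^*).

Definition gbinom (x : R) (m : nat) : R :=
  (\prod_(i < m) (x - i%:R)) / (m`!)%:R.

Definition laguerre (beta : R) (n : nat) : {poly C} :=
  \poly_(k < n.+1) ((((-1) ^+ k) / (k`!)%:R * gbinom (n%:R + beta) (n - k))%:C)%C.

Definition Dtilde (d : nat -> C) : Prop :=
  (forall n, d n != 0) /\ (exists m n, d m != d n).

Definition prevseq (d : nat -> C) (n : nat) : C :=
  if n is n'.+1 then d n' else 0.

Definition combo (Q : nat -> {poly C}) (a : nat -> C) (N : nat) : {poly C} :=
  \sum_(k < N) a k *: Q k.

(* The operator T (a linear map on P_c), regarded as an operator in H(Q) with
   domain P_c, where H(Q) is identified with l_2 via g = sum_k g_k Q_k.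
   [opgraph Q T a b] : the pair (a, b) of coefficient sequences belongs to the
   graph, i.e. a, b are finitely supported and T (sum a_k Q_k) = sum b_k Q_k. *)
Definition opgraph (Q : nat -> {poly C}) (T : {poly C} -> {poly C})
    (a b : nat -> C) : Prop :=
  exists N : nat, (forall k, (N <= k)%N -> a k = 0 /\ b k = 0) /\
    T (combo Q a N) = combo Q b N.

(* [adj_rel Q T g h] : g is in D(T^* ) and T^* g = h, i.e. <T f, g> = <f, h>
   for all f in D(T) = P_c. *)
Definition adj_rel (Q : nat -> {poly C}) (T : {poly C} -> {poly C})
    (g h : nat -> C) : Prop :=
  l2 g /\ l2 h /\ forall a b, opgraph Q T a b -> ip b g = ip a h.

Definition adj_dom (Q : nat -> {poly C}) (T : {poly C} -> {poly C})
    (g : nat -> C) : Prop := exists h, adj_rel Q T g h.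

(* [clos_rel Q T g h] : (g, h) belongs to the closure of the graph of T in
   H(Q) x H(Q). *)
Definition clos_rel (Q : nat -> {poly C}) (T : {poly C} -> {poly C})
    (g h : nat -> C) : Prop :=
  l2 g /\ l2 h /\
  exists A B : nat -> nat -> C,
    (forall n, opgraph Q T (A n) (B n)) /\
    (fun n => l2norm2 (fun k => A n k - g k)) @ \oo --> (0 : R) /\
    (fun n => l2norm2 (fun k => B n k - h k)) @ \oo --> (0 : R).

Definition closable (Q : nat -> {poly C}) (T : {poly C} -> {poly C}) : Prop :=
  forall g h h', clos_rel Q T g h -> clos_rel Q T g h' -> h = h'.

Definition clos_dom (Q : nat -> {poly C}) (T : {poly C} -> {poly C})
    (g : nat -> C) : Prop := exists h, clos_rel Q T g h.

End Defs.

From HB Require Import structures.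
From mathcomp Require Import all_boot all_order all_algebra.
From mathcomp Require Import all_classical all_reals all_analysis.
From mathcomp Require Import complex.
Import Order.TTheory GRing.Theory Num.Theory.
Import numFieldNormedType.Exports.
From mathcomp Require Import ring lra.
Local Open Scope classical_set_scope.
Local Open Scope ring_scope.

Set Implicit Arguments. Unset Strict Implicit. Unset Printing Implicit Defensive.

(** Write [p_n = L_n^(alpha+1)] and [q_n = L_n^(alpha)].  Since
  [p_n = q_0 + ... + q_n], a polynomial [f = sum_k a_k q_k] equals
  [sum_m (a_m - a_(m+1)) p_m], hence [T f = sum_k b_k q_k] with
  [b_k = sum_(m >= k) d_m (a_m - a_(m+1))].  Summation by parts turns
  [<T f, g>] into [sum_m a_m conj((M g)_m)], where [M g] is the sequence of
  (i)-(ii); testing against the unit vectors [e_s] shows that [T^* g] must be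
  [M g], and [M e_s] is, up to finitely many terms, the sequence of steps
  [conj d_k - conj d_(k-1)], which gives (iii).

  When these steps are square summable every [M e_s] lies in [l_2], so each
  coordinate of the closure is continuous: [(closure T g)_s = <g, M e_s>],
  which is the series [(S g)_s] of (iv); in particular [T] is closable.
  Conversely, [S g] telescopes, [(S g)_m - (S g)_(m+1) = d_m (g_m - g_(m+1))],
  so [T] maps the truncation [g_k - g_(N+1)] (for [k <= N]) of [g] to the
  same truncation of [S g].  The [l_2] error of such a truncation is about
  [N |g_(N+1)|^2] plus a tail of [sum |g_k|^2]; as the harmonic series
  diverges, [N |g_(N+1)|^2] is small along a subsequence, along which both
  truncations converge. *)

Section SquaredModulus.
Variable R : realType.
Local Notation C := R[i].

Lemma sqn_ge0 (z : C) : 0 <= sqn z.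
Proof. by rewrite /sqn addr_ge0 // sqr_ge0. Qed.

Lemma sqn0 : sqn (0 : C) = 0.
Proof. by rewrite /sqn /= expr0n /= addr0. Qed.

Lemma sqnN (z : C) : sqn (- z) = sqn z.
Proof. by case: z => a b; rewrite /sqn /= !sqrrN. Qed.

Lemma sqn_conj (z : C) : sqn z^* = sqn z.
Proof. by case: z => a b; rewrite /sqn /= sqrrN. Qed.

Lemma eq0_sqn (z : C) : sqn z = 0 -> z = 0.
Proof.
case: z => a b; rewrite /sqn /= => h.
have ha : a = 0 by apply/eqP; rewrite -sqrf_eq0; apply/eqP; nra.
have hb : b = 0 by apply/eqP; rewrite -sqrf_eq0; apply/eqP; nra.
by rewrite ha hb.
Qed.

Lemma sqn_small_eq0 (z : C) : (forall eta, 0 < eta -> sqn z <= eta) -> z = 0.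
Proof.
move=> h; apply: eq0_sqn; apply/eqP; rewrite eq_le sqn_ge0 andbT leNgt.
by apply/negP => hz; have := h (sqn z / 2); rewrite divr_gt0 // => /(_ isT); lra.
Qed.

Lemma sqnD_le (z w : C) : sqn (z + w) <= 2 * (sqn z + sqn w).
Proof.
case: z => a b; case: w => c e; rewrite /sqn /=.
have := sqr_ge0 (a - c); have := sqr_ge0 (b - e); nra.
Qed.

Lemma Re_mul_le (z w : C) (e : R) : 0 < e ->
  2 * e * `|complex.Re (z * w)| <= sqn z + e ^+ 2 * sqn w.
Proof.
case: z => a b; case: w => c f; rewrite /sqn /= => he.
have [h|h] := lerP 0 (a * c - b * f).
  rewrite ger0_norm //.
  have := sqr_ge0 (a - e * c); have := sqr_ge0 (b + e * f); nra.
rewrite ltr0_norm //.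
have := sqr_ge0 (a + e * c); have := sqr_ge0 (b - e * f); nra.
Qed.

Lemma Im_mul_le (z w : C) (e : R) : 0 < e ->
  2 * e * `|complex.Im (z * w)| <= sqn z + e ^+ 2 * sqn w.
Proof.
case: z => a b; case: w => c f; rewrite /sqn /= => he.
have [h|h] := lerP 0 (a * f + b * c).
  rewrite ger0_norm //.
  have := sqr_ge0 (a - e * f); have := sqr_ge0 (b - e * c); nra.
rewrite ltr0_norm //.
have := sqr_ge0 (a + e * f); have := sqr_ge0 (b + e * c); nra.
Qed.

End SquaredModulus.

Section BoundedSeries.
Variable R : realType.

Definition bounded_series (u : nat -> R) := exists M, forall n, series u n <= M.

Lemma series_split (u : nat -> R) m n :
  series u (m + n)%N = series u m + series (fun j => u (m + j)%N) n.
Proof.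
rewrite /series /= (big_cat_nat (leq0n m) (leq_addr n m)) /=; congr (_ + _).
rewrite -{1}[m]add0n big_addn addKn.
by apply: eq_bigr => i _; rewrite addnC.
Qed.

Lemma series_nondecreasing (u : nat -> R) : (forall k, 0 <= u k) ->
  {homo series u : n m / (n <= m)%N >-> n <= m}.
Proof. by move=> h n m nm; apply: (nondecreasing_series (P := xpredT)). Qed.

Lemma bounded_series_cvg (u : nat -> R) : (forall k, 0 <= u k) ->
  bounded_series u -> cvgn (series u).
Proof.
move=> h [M hM]; apply: nondecreasing_is_cvgn; first exact: series_nondecreasing.
by exists M => _ [n _ <-]; exact: hM.
Qed.

Lemma series_le_limn (u : nat -> R) n : (forall k, 0 <= u k) ->
  cvgn (series u) -> series u n <= limn (series u).
Proof.
by move=> h hc; apply: nondecreasing_cvgn_le => //; exact: series_nondecreasing.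
Qed.

Lemma cvg_bounded_series (u : nat -> R) : (forall k, 0 <= u k) ->
  cvgn (series u) -> bounded_series u.
Proof. by move=> h hc; exists (limn (series u)) => n; exact: series_le_limn. Qed.

Lemma bounded_series_le (u v : nat -> R) : (forall k, u k <= v k) ->
  bounded_series v -> bounded_series u.
Proof.
move=> h [M hM]; exists M => n; apply: le_trans (hM n).
by rewrite !seriesEord; apply: ler_sum => k _.
Qed.

Lemma bounded_seriesD (u v : nat -> R) : bounded_series u -> bounded_series v ->
  bounded_series (fun k => u k + v k).
Proof.
move=> [M hM] [M' hM']; exists (M + M') => n.
by have := lerD (hM n) (hM' n); rewrite !seriesEord /= big_split.
Qed.

Lemma bounded_seriesZ (u : nat -> R) c : 0 <= c -> bounded_series u ->
  bounded_series (fun k => c * u k).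
Proof.
move=> hc [M hM]; exists (c * M) => n.
by have := ler_wpM2l hc (hM n); rewrite !seriesEord /= mulr_sumr.
Qed.

Lemma series_fin (u : nat -> R) N n : (forall k, (N <= k)%N -> u k = 0) ->
  (N <= n)%N -> series u n = series u N.
Proof.
move=> h /subnKC <-; rewrite series_split -[RHS]addr0; congr (_ + _).
by rewrite seriesEord /= big1 // => k _; rewrite h ?leq_addr.
Qed.

Lemma bounded_series_fin (u : nat -> R) N : (forall k, (N <= k)%N -> u k = 0) ->
  bounded_series u.
Proof.
move=> h; exists (series (fun k => `|u k|) N) => n.
apply: (@le_trans _ _ (series (fun k => `|u k|) (N + n))).
  apply: (@le_trans _ _ (series (fun k => `|u k|) n)).
    by rewrite !seriesEord; apply: ler_sum => k _; exact: ler_norm.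
  exact: series_nondecreasing (leq_addl N n).
by rewrite (series_fin (N := N)) ?leq_addr // => k hk; rewrite h ?normr0.
Qed.

Lemma bounded_series_shiftn (u : nat -> R) m : (forall k, 0 <= u k) ->
  bounded_series u -> bounded_series (fun j => u (m + j)%N).
Proof.
move=> h [M hM]; exists M => n; apply: le_trans (hM (m + n)%N).
rewrite series_split lerDr seriesEord; apply: sumr_ge0 => i _; exact: h.
Qed.

Lemma cvg_series_shiftn (u : nat -> R) m :
  cvgn (series (fun j => u (m + j)%N)) ->
  series u @ \oo --> \sum_(k < m) u k + limn (series (fun j => u (m + j)%N)).
Proof.
move=> hc; rewrite -(cvg_shiftn m).
have -> : [sequence series u (n + m)%N]_n =
          (fun=> \sum_(k < m) u k) + series (fun j => u (m + j)%N).
  by apply/funext => n /=; rewrite addnC series_split seriesEord.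
exact: cvgD (cvg_cst _) hc.
Qed.

Lemma tail_index_small (w : nat -> R) : (forall k, 0 <= w k) ->
  bounded_series w ->
  forall n, exists N, (n <= N)%N /\ N.+1%:R * w N.+1 <= n.+1%:R^-1.
Proof.
move=> w0 hw n; apply: contrapT => hno; apply: (@dvg_harmonic R).
have inv_le (a K x : R) : 0 < a -> 0 < K -> a^-1 < K * x -> K^-1 <= a * x.
  move=> ha hK; rewrite -(ltr_pM2l ha) mulfV ?gt_eqF // => h.
  by rewrite -(ler_pM2l hK) mulfV ?gt_eqF // mulrCA ltW.
have hlarge j : harmonic (n + j)%N <= n.+1%:R * w (n.+1 + j)%N.
  rewrite addSn; apply: inv_le; rewrite ?ltr0n // ltNge; apply/negP => hle.
  by apply: hno; exists (n + j)%N; rewrite leq_addr.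
have [M hM] : bounded_series (fun j => harmonic (n + j)%N).
  apply: bounded_series_le hlarge _; apply: bounded_seriesZ; first exact: ler0n.
  exact: bounded_series_shiftn.
have harm0 k : 0 <= harmonic k :> R by rewrite /harmonic /= invr_ge0 ler0n.
apply: (bounded_series_cvg harm0); exists (series harmonic n + M) => m.
apply: le_trans (series_nondecreasing harm0 (leq_addl n m)) _.
by rewrite series_split lerD2l.
Qed.

End BoundedSeries.

Section SquareSummable.
Variable R : realType.
Local Notation C := R[i].

Lemma l2_bounded (a : nat -> C) : l2 a <-> bounded_series (fun k => sqn (a k)).
Proof.
split; first by apply: cvg_bounded_series => k; exact: sqn_ge0.
by apply: bounded_series_cvg => k; exact: sqn_ge0.
Qed.

Lemma l2_le (a b : nat -> C) c : 0 <= c ->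
  (forall k, sqn (a k) <= c * sqn (b k)) -> l2 b -> l2 a.
Proof.
move=> hc h /l2_bounded hb; apply/l2_bounded.
exact: bounded_series_le h (bounded_seriesZ hc hb).
Qed.

Lemma l2D (a b : nat -> C) : l2 a -> l2 b -> l2 (fun k => a k + b k).
Proof.
move=> /l2_bounded ha /l2_bounded hb; apply/l2_bounded.
apply: (bounded_series_le (fun k => sqnD_le (a k) (b k))).
by apply: bounded_seriesZ => //; exact: bounded_seriesD.
Qed.

Lemma l2B (a b : nat -> C) : l2 a -> l2 b -> l2 (fun k => a k - b k).
Proof.
move=> ha hb; apply: l2D ha _.
by apply: (l2_le (c := 1)) hb => // k; rewrite sqnN mul1r.
Qed.

Lemma l2_conj (a : nat -> C) : l2 a -> l2 (fun k => (a k)^*).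
Proof. by apply: (l2_le (c := 1)) => // k; rewrite sqn_conj mul1r. Qed.

Lemma l2_fin (a : nat -> C) N : (forall k, (N <= k)%N -> a k = 0) -> l2 a.
Proof.
move=> h; apply/l2_bounded; apply: (bounded_series_fin (N := N)) => k hk.
by rewrite h // sqn0.
Qed.

Lemma l2_shiftn (a : nat -> C) m : l2 a -> l2 (fun j => a (m + j)%N).
Proof.
move=> /l2_bounded h; apply/l2_bounded.
by apply: (bounded_series_shiftn (u := fun k => sqn (a k))) => // k; exact: sqn_ge0.
Qed.

Lemma l2_eventually_eq (a b : nat -> C) m :
  (forall k, (m <= k)%N -> a k = b k) -> l2 a -> l2 b.
Proof.
move=> h ha; have -> : b = (fun k => a k + (b k - a k)).
  by apply/funext => k; rewrite addrC subrK.
apply: l2D => //; apply: (l2_fin (N := m)) => k hk.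
by rewrite h // subrr.
Qed.

Lemma sqn_le_l2norm2 (a : nat -> C) s : l2 a -> sqn (a s) <= l2norm2 a.
Proof.
move=> ha; apply: le_trans (series_le_limn s.+1 _ ha); last by move=> k; exact: sqn_ge0.
rewrite seriesEord /= big_ord_recr /= lerDr.
by apply: sumr_ge0 => k _; exact: sqn_ge0.
Qed.

Lemma l2norm2_ge0 (a : nat -> C) : l2 a -> 0 <= l2norm2 a.
Proof. by move=> ha; apply: le_trans (sqn_le_l2norm2 0 ha); exact: sqn_ge0. Qed.

Lemma l2norm2_le (a : nat -> C) M : l2 a ->
  (forall n, series (fun k => sqn (a k)) n <= M) -> l2norm2 a <= M.
Proof. by move=> ha hM; apply: limr_le => //; exact: nearW. Qed.

End SquareSummable.

Section ComplexSeries.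
Variable R : realType.
Local Notation C := R[i].

Definition abs_summable (u : nat -> C) :=
  bounded_series (fun k => `|complex.Re (u k)| + `|complex.Im (u k)|).

Lemma abs_summable_cvg_Re (u : nat -> C) : abs_summable u ->
  cvgn (series (fun k => complex.Re (u k))).
Proof.
move=> h; apply: normed_cvg; apply: bounded_series_cvg => [k|]; first exact: normr_ge0.
by apply: (bounded_series_le _ h) => k /=; rewrite lerDl.
Qed.

Lemma abs_summable_cvg_Im (u : nat -> C) : abs_summable u ->
  cvgn (series (fun k => complex.Im (u k))).
Proof.
move=> h; apply: normed_cvg; apply: bounded_series_cvg => [k|]; first exact: normr_ge0.
by apply: (bounded_series_le _ h) => k /=; rewrite lerDr.
Qed.

Lemma abs_summable_shiftn (u : nat -> C) m : abs_summable u ->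
  abs_summable (fun j => u (m + j)%N).
Proof. by apply: bounded_series_shiftn => k; rewrite addr_ge0. Qed.

Lemma abs_summable_l2M (a b : nat -> C) : l2 a -> l2 b ->
  abs_summable (fun k => a k * b k).
Proof.
move=> /l2_bounded ha /l2_bounded hb.
apply: bounded_series_le (bounded_seriesD ha hb) => k.
have := Re_mul_le (a k) (b k) ltr01; have := Im_mul_le (a k) (b k) ltr01.
rewrite expr1n mul1r mulr1; lra.
Qed.

Lemma csumE (u : nat -> C) a b :
  series (fun k => complex.Re (u k)) @ \oo --> a ->
  series (fun k => complex.Im (u k)) @ \oo --> b -> csum u = (a +i* b)%C.
Proof.
by move=> ha hb; rewrite /csum (cvg_lim (@Rhausdorff R) ha) (cvg_lim (@Rhausdorff R) hb).
Qed.

Lemma csum_fin (u : nat -> C) N : (forall k, (N <= k)%N -> u k = 0) ->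
  csum u = \sum_(k < N) u k.
Proof.
move=> h; rewrite (@csumE u (series (fun k => complex.Re (u k)) N)
                            (series (fun k => complex.Im (u k)) N)).
- by rewrite !seriesEord /= -!raddf_sum; case: (\sum_(k < N) u k).
- apply: cvg_near_cst; apply: filterS (nbhs_infty_ge N) => n hn.
  by apply: series_fin => // k hk; rewrite h.
- apply: cvg_near_cst; apply: filterS (nbhs_infty_ge N) => n hn.
  by apply: series_fin => // k hk; rewrite h.
Qed.

Lemma csum_shiftn (u : nat -> C) m : abs_summable u ->
  csum u = \sum_(k < m) u k + csum (fun j => u (m + j)%N).
Proof.
move=> /(abs_summable_shiftn m) hm.
rewrite (csumE (cvg_series_shiftn (u := fun k => complex.Re (u k)) (abs_summable_cvg_Re hm))
               (cvg_series_shiftn (u := fun k => complex.Im (u k)) (abs_summable_cvg_Im hm))).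
by rewrite -!raddf_sum /csum; case: (\sum_(k < m) u k).
Qed.

Lemma csumB (u v : nat -> C) : abs_summable u -> abs_summable v ->
  csum (fun k => u k - v k) = csum u - csum v.
Proof.
move=> hu hv; rewrite (@csumE _
  (limn (series (fun k => complex.Re (u k))) - limn (series (fun k => complex.Re (v k))))
  (limn (series (fun k => complex.Im (u k))) - limn (series (fun k => complex.Im (v k))))).
- by rewrite /csum.
- under eq_fun do rewrite raddfB; rewrite seriesD seriesN.
  exact: cvgB (abs_summable_cvg_Re hu) (abs_summable_cvg_Re hv).
- under eq_fun do rewrite raddfB; rewrite seriesD seriesN.
  exact: cvgB (abs_summable_cvg_Im hu) (abs_summable_cvg_Im hv).
Qed.

Lemma abs_summable_ip (a b : nat -> C) : l2 a -> l2 b ->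
  abs_summable (fun k => a k * (b k)^*).
Proof. by move=> ha hb; apply: abs_summable_l2M => //; exact: l2_conj. Qed.

Lemma ipBl (a a' b : nat -> C) : l2 a -> l2 a' -> l2 b ->
  ip (fun k => a k - a' k) b = ip a b - ip a' b.
Proof.
move=> ha ha' hb; rewrite /ip -csumB; try exact: abs_summable_ip.
by congr csum; apply/funext => k; rewrite mulrBl.
Qed.

Lemma ip_fin (a b : nat -> C) N : (forall k, (N <= k)%N -> a k = 0) ->
  ip a b = \sum_(k < N) a k * (b k)^*.
Proof. by move=> h; rewrite /ip (csum_fin (N := N)) // => k hk; rewrite h ?mul0r. Qed.

Lemma norm_limn_le (s : nat -> R) M : cvgn s -> (forall n, `|s n| <= M) ->
  `|limn s| <= M.
Proof.
move=> hc h; rewrite ler_norml; apply/andP; split.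
  by apply: limr_ge => //; apply: nearW => n; have := h n; rewrite ler_norml => /andP [].
by apply: limr_le => //; apply: nearW => n; have := h n; rewrite ler_norml => /andP [].
Qed.

Lemma ip_ReIm_le (a b : nat -> C) e : l2 a -> l2 b -> 0 < e ->
  2 * e * `|complex.Re (ip a b)| <= l2norm2 a + e ^+ 2 * l2norm2 b /\
  2 * e * `|complex.Im (ip a b)| <= l2norm2 a + e ^+ 2 * l2norm2 b.
Proof.
move=> ha hb he; set K := l2norm2 a + e ^+ 2 * l2norm2 b.
have h2e : 0 < 2 * e by rewrite mulr_gt0.
have partial_le n :
    series (fun k => sqn (a k)) n + e ^+ 2 * series (fun k => sqn (b k)) n <= K.
  apply: lerD; first by apply: series_le_limn => // k; exact: sqn_ge0.
  by rewrite ler_pM2l ?exprn_gt0 //; apply: series_le_limn => // k; exact: sqn_ge0.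
have limn_le (f : C -> R) :
    (forall z w, 2 * e * `|f (z * w)| <= sqn z + e ^+ 2 * sqn w) ->
    cvgn (series (fun k => f (a k * (b k)^*))) ->
    2 * e * `|limn (series (fun k => f (a k * (b k)^*)))| <= K.
  move=> hf hc; rewrite -ler_pdivlMl //; apply: norm_limn_le hc _ => n.
  rewrite ler_pdivlMl //; apply: le_trans (partial_le n).
  rewrite !seriesEord /= mulr_sumr -big_split /=.
  apply: le_trans (ler_wpM2l (ltW h2e) (ler_norm_sum _ _ _)) _.
  by rewrite mulr_sumr; apply: ler_sum => k _; rewrite -(sqn_conj (b k)) hf.
have hab := abs_summable_ip ha hb.
split; apply: limn_le.
- by move=> z w; exact: Re_mul_le.
- exact: abs_summable_cvg_Re.
- by move=> z w; exact: Im_mul_le.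
- exact: abs_summable_cvg_Im.
Qed.

Lemma ip_small (v : nat -> C) (eta : R) : l2 v -> 0 < eta ->
  exists2 delta : R, 0 < delta & forall w, l2 w -> l2norm2 w <= delta ->
    sqn (ip w v) <= eta.
Proof.
move=> hv heta; set Y := l2norm2 v; have hY : 0 <= Y := l2norm2_ge0 hv.
set t := Order.min 1 (eta / 2).
have ht : 0 < t by rewrite lt_min ltr01 divr_gt0.
have t_sqr : 2 * t ^+ 2 <= eta.
  have : t <= 1 by rewrite ge_min lexx.
  have : t <= eta / 2 by rewrite ge_min lexx orbT.
  nra.
set e := t / (Y + 1).
have he : 0 < e by rewrite divr_gt0 // ltr_pwDr.
have heY : e * Y <= t by rewrite /e mulrAC ler_pdivrMr ?ltr_pwDr // ler_pM2l //; lra.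
exists (e * t); first by rewrite mulr_gt0.
move=> w hw hwd.
have component_le (x : R) : 2 * e * `|x| <= l2norm2 w + e ^+ 2 * Y -> x ^+ 2 <= t ^+ 2.
  move=> hx; have hxt : `|x| <= t by nra.
  by move: hxt; rewrite ler_norml => /andP [? ?]; nra.
have [hRe hIm] := ip_ReIm_le hw hv he.
by rewrite /sqn; have := component_le _ hRe; have := component_le _ hIm; lra.
Qed.

Lemma cvg0_eventually_le (f : nat -> R) (delta : R) : f @ \oo --> 0 -> 0 < delta ->
  \forall n \near \oo, f n <= delta.
Proof.
move=> /cvgrPdist_le /(_ delta) H hd; apply: filterS (H hd) => n.
by rewrite sub0r normrN; apply: le_trans (ler_norm _).
Qed.

End ComplexSeries.

Section Laguerre.
Variable R : realType.
Local Notation C := R[i].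

Lemma gbinom0 (x : R) : gbinom x 0 = 1.
Proof. by rewrite /gbinom big_ord0 fact0 divr1. Qed.

Lemma gbinom_pascal (x : R) (m : nat) :
  gbinom (x + 1) m.+1 = gbinom x m.+1 + gbinom x m.
Proof.
rewrite /gbinom big_ord_recl big_ord_recr /=.
have -> : \prod_(i < m) (x + 1 - (lift ord0 i)%:R) = \prod_(i < m) (x - i%:R).
  by apply: eq_bigr => i _; rewrite /= mulrS; ring.
have hf : (m`!)%:R != 0 :> R by rewrite pnatr_eq0 -lt0n fact_gt0.
have hm : (m.+1)%:R != 0 :> R by rewrite pnatr_eq0.
rewrite factS natrM subr0; field; by rewrite hf -mulrS.
Qed.

Lemma laguerre_param_succ (beta : R) (n : nat) :
  laguerre beta n =
  laguerre (beta + 1) n - if n is n'.+1 then laguerre (beta + 1) n' else 0.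
Proof.
apply/polyP => k; rewrite coefB /laguerre.
case: n => [|n] /=.
  by rewrite coef0 subr0 !coef_poly; case: k => [|k] //=; rewrite !gbinom0.
rewrite !coef_poly; have [hk|hk] := ltnP k n.+1.
  rewrite ltnS ltnW // subSn // -rmorphB /= -mulrBr; congr ((_ * _)%:C)%C.
  have -> : n.+1%:R + (beta + 1) = (n.+1%:R + beta) + 1 by ring.
  have -> : n%:R + (beta + 1) = n.+1%:R + beta by rewrite mulrS; ring.
  by rewrite gbinom_pascal addrK.
rewrite subr0; case: ltnP => hk2 //.
have -> : k = n.+1 by apply/eqP; rewrite eqn_leq hk -ltnS hk2.
by rewrite subnn !gbinom0.
Qed.

Lemma laguerre_param_succ_sum (beta : R) n :
  laguerre (beta + 1) n = \sum_(t < n.+1) laguerre beta t.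
Proof.
elim: n => [|n IH]; first by rewrite big_ord1 (laguerre_param_succ beta 0) subr0.
by rewrite big_ord_recr /= -IH (laguerre_param_succ beta n.+1) addrC subrK.
Qed.

Lemma laguerre_coef_deg (beta : R) n : (laguerre beta n)`_n != 0.
Proof.
rewrite /laguerre coef_poly ltnSn subnn gbinom0 mulr1 (inj_eq (@complexI R)).
by rewrite mulf_neq0 ?invr_eq0 ?pnatr_eq0 -?lt0n ?fact_gt0 // signr_eq0.
Qed.

Lemma laguerre_coef_gt (beta : R) n k : (n < k)%N -> (laguerre beta n)`_k = 0.
Proof. by move=> h; rewrite /laguerre coef_poly ltnNge h. Qed.

Lemma combo_eq0 (beta : R) c N : combo (laguerre beta) c N = 0 ->
  forall k, (k < N)%N -> c k = 0.
Proof.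
elim: N => [|N IH] h k hk //.
rewrite /combo big_ord_recr /= in h.
have hcN : c N = 0.
  have /eqP := congr1 (fun P : {poly C} => P`_N) h.
  rewrite coef0 coefD coefZ coef_sum big1 ?add0r; last first.
    by move=> i _; rewrite coefZ laguerre_coef_gt ?mulr0.
  by rewrite mulf_eq0 (negbTE (laguerre_coef_deg beta N)) orbF => /eqP.
move: hk; rewrite ltnS leq_eqVlt => /orP [/eqP -> //|hk].
by apply: IH => //; rewrite -h hcN scale0r addr0.
Qed.

Lemma combo_inj (beta : R) b b' N :
  combo (laguerre beta) b N = combo (laguerre beta) b' N ->
  forall k, (k < N)%N -> b k = b' k.
Proof.
move=> h k hk; apply/eqP; rewrite -subr_eq0; apply/eqP.
apply: (@combo_eq0 beta (fun k => b k - b' k) N) => //.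
rewrite /combo -[RHS](subrr (combo (laguerre beta) b N)) {2}h /combo -sumrB.
by apply: eq_bigr => i _; rewrite scalerBl.
Qed.

End Laguerre.

Section SummationByParts.
Variable R : realType.
Local Notation C := R[i].

Definition tail_sum (c : nat -> C) (N k : nat) : C :=
  \sum_(m < N) (k <= m)%:R * c m.

Lemma tail_sumE (c : nat -> C) N k : (k <= N)%N ->
  tail_sum c N k = \sum_(k <= m < N) c m.
Proof.
move=> hk; rewrite /tail_sum -(big_mkord xpredT (fun m => (k <= m)%:R * c m)).
rewrite (big_cat_nat (leq0n k) hk) /= big_nat_cond big1 ?add0r.
  by apply: eq_big_nat => m /andP [hm _]; rewrite hm mul1r.
by move=> m /andP [/andP [_ hm] _]; rewrite leqNgt hm mul0r.
Qed.

Lemma tail_sum_ge (c : nat -> C) N k : (N <= k)%N -> tail_sum c N k = 0.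
Proof.
move=> hk; rewrite /tail_sum big1 // => m _.
by rewrite leqNgt (leq_trans (ltn_ord m) hk) mul0r.
Qed.

Lemma tail_sum_telescope (a : nat -> C) N k : (k <= N)%N ->
  tail_sum (fun m => a m - a m.+1) N k = a k - a N.
Proof.
move=> hk; rewrite tail_sumE // -[a k - a N]opprB -(telescope_sumr a hk) -sumrN.
by apply: eq_bigr => i _; rewrite opprB.
Qed.

Lemma sum_by_parts (w a : nat -> C) N :
  \sum_(m < N) w m * (a m - a m.+1) =
  \sum_(m < N) a m * (w m - prevseq w m) - prevseq w N * a N.
Proof.
elim: N => [|N IH]; first by rewrite !big_ord0 /= mul0r subr0.
by rewrite !big_ord_recr /= IH; case: N IH => [|N] _ /=; ring.
Qed.

Lemma sum_mul_delta (x : nat -> C) (s M : nat) :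
  \sum_(k < M) x k * ((k : nat) == s)%:R = (s < M)%:R * x s.
Proof.
elim: M => [|M IH]; first by rewrite big_ord0 mul0r.
rewrite big_ord_recr /= IH; case: (eqVneq M s) => [->|hM] /=.
  by rewrite ltnn ltnSn mul0r add0r mul1r mulr1.
by rewrite [in RHS]ltnS [in RHS]leq_eqVlt eq_sym (negbTE hM) mulr0 addr0.
Qed.

Lemma sum_indicator_le (x : nat -> C) m N : (m < N)%N ->
  \sum_(k < N) (k <= m)%:R * x k = \sum_(k < m.+1) x k.
Proof.
move=> hm; rewrite (big_ord_widen N x hm) [RHS]big_mkcond /=.
by apply: eq_bigr => k _; rewrite ltnS; case: (_ <= _)%N; rewrite ?mul1r ?mul0r.
Qed.

Lemma combo_ext (Q : nat -> {poly C}) a a' N :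
  (forall k, (k < N)%N -> a k = a' k) -> combo Q a N = combo Q a' N.
Proof. by move=> h; apply: eq_bigr => i _; rewrite h. Qed.

Lemma combo_telescope (Q : nat -> {poly C}) a N :
  (forall k, (N <= k)%N -> a k = 0) ->
  combo Q a N = combo Q (tail_sum (fun m => a m - a m.+1) N) N.
Proof.
move=> h; apply: combo_ext => k hk.
by rewrite tail_sum_telescope ?(ltnW hk) // (h N) // subr0.
Qed.

Lemma combo_tail_sum (beta : R) c N :
  combo (laguerre beta) (tail_sum c N) N = \sum_(m < N) c m *: laguerre (beta + 1) m.
Proof.
rewrite /combo /tail_sum; under eq_bigr do rewrite scaler_suml.
rewrite exchange_big /=; apply: eq_bigr => m _.
rewrite laguerre_param_succ_sum scaler_sumr.
rewrite (big_ord_widen N (fun t => c m *: laguerre beta t) (ltn_ord m)).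
rewrite [RHS]big_mkcond /=; apply: eq_bigr => k _.
by rewrite ltnS; case: (_ <= _)%N; rewrite ?mul1r ?mul0r ?scale0r.
Qed.

End SummationByParts.

Section Operator.
Variable R : realType.
Local Notation C := R[i].
Variables (alpha : R) (d : nat -> C) (T : {linear {poly C} -> {poly C}}).
Hypothesis Tp : forall n, T (laguerre (alpha + 1) n) = d n *: laguerre (alpha + 1) n.
Local Notation q := (laguerre alpha).

Lemma T_combo_tail_sum c N :
  T (combo q (tail_sum c N) N) = combo q (tail_sum (fun m => d m * c m) N) N.
Proof.
rewrite !combo_tail_sum linear_sum; apply: eq_bigr => m _.
by rewrite linearZ /= Tp scalerA mulrC.
Qed.

Definition image_coef (a : nat -> C) (N : nat) : nat -> C :=
  tail_sum (fun m => d m * (a m - a m.+1)) N.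

Lemma opgraph_image_coef a N : (forall k, (N <= k)%N -> a k = 0) ->
  opgraph q T a (image_coef a N).
Proof.
move=> h; exists N; split; first by move=> k hk; rewrite h // /image_coef tail_sum_ge.
by rewrite (combo_telescope _ h) T_combo_tail_sum.
Qed.

Lemma opgraph_image a b : opgraph q T a b ->
  exists N, (forall k, (N <= k)%N -> a k = 0) /\ b = image_coef a N.
Proof.
move=> [N [hN heq]]; have ha k (hk : (N <= k)%N) : a k = 0 by case: (hN k hk).
exists N; split => //; apply/funext => k.
have [hk|hk] := ltnP k N; last by rewrite /image_coef tail_sum_ge // (hN k hk).2.
by apply: (combo_inj (beta := alpha) _ hk); rewrite -heq (combo_telescope _ ha) T_combo_tail_sum.
Qed.

Definition adj_coef (g : nat -> C) (k : nat) : C :=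
  g k * (d k)^* + ((d k)^* - (prevseq d k)^*) * \sum_(t < k) g t.

Lemma adj_coef_conj (g : nat -> C) :
  let w m := d m * (\sum_(k < m.+1) g k)^* in
  forall m, (adj_coef g m)^* = w m - prevseq w m.
Proof.
move=> w [|m]; rewrite /adj_coef /w /prevseq.
  by rewrite big_ord0 big_ord1 !rmorphD !rmorphM !rmorphB /= conjCK !rmorph0; ring.
by rewrite [in RHS]big_ord_recr /= !rmorphD !rmorphM !rmorphB /= !conjCK; ring.
Qed.

Lemma ip_image_coef (a g : nat -> C) N : (forall k, (N <= k)%N -> a k = 0) ->
  ip (image_coef a N) g = \sum_(m < N) a m * (adj_coef g m)^*.
Proof.
move=> ha; rewrite (@ip_fin _ _ _ N); last by move=> k hk; rewrite /image_coef tail_sum_ge.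
rewrite /image_coef /tail_sum; under eq_bigr do rewrite mulr_suml.
rewrite exchange_big /=.
set w := fun m => d m * (\sum_(k < m.+1) g k)^*.
transitivity (\sum_(m < N) w m * (a m - a m.+1)).
  apply: eq_bigr => m _; rewrite /w rmorph_sum /=.
  rewrite -(sum_indicator_le (fun k => (g k)^*) (ltn_ord m)) mulr_sumr mulr_suml.
  by apply: eq_bigr => k _; ring.
rewrite sum_by_parts (ha N) // mulr0 subr0.
by apply: eq_bigr => m _; rewrite adj_coef_conj.
Qed.

Lemma adj_rel_coef (g h : nat -> C) : adj_rel q T g h -> h = adj_coef g.
Proof.
move=> [hg [hh hadj]]; apply/funext => s.
set a := fun k : nat => (k == s)%:R : C.
have ha k : (s.+1 <= k)%N -> a k = 0.
  by rewrite /a; case: eqP => // ->; rewrite ltnn.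
have := hadj _ _ (opgraph_image_coef ha).
rewrite ip_image_coef // (@ip_fin _ _ _ s.+1) // /a.
under eq_bigr do rewrite mulrC.
under [in RHS]eq_bigr do rewrite mulrC.
rewrite (sum_mul_delta (fun k => (adj_coef g k)^*)) (sum_mul_delta (fun k => (h k)^*)).
by rewrite ltnSn !mul1r => /(can_inj conjCK).
Qed.

Lemma adj_domP (g : nat -> C) : l2 g -> adj_dom q T g <-> l2 (adj_coef g).
Proof.
move=> hg; split; first by move=> [h H]; rewrite -(adj_rel_coef H); case: H => _ [].
move=> hM; exists (adj_coef g); split => //; split => // a b hab.
have [N [ha ->]] := opgraph_image hab.
by rewrite ip_image_coef // (@ip_fin _ _ _ N).
Qed.

Definition delta_seq (s : nat) : nat -> C := fun k => (k == s)%:R.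

Definition conj_step (k : nat) : C := (d k)^* - (prevseq d k)^*.

Lemma l2_delta_seq s : l2 (delta_seq s).
Proof.
by apply: (l2_fin (N := s.+1)) => k hk; rewrite /delta_seq; case: eqP hk => // ->; rewrite ltnn.
Qed.

Lemma adj_coef_delta s k :
  adj_coef (delta_seq s) k = (k == s)%:R * (d k)^* + (s < k)%:R * conj_step k.
Proof.
rewrite /adj_coef mulrC; congr (_ + _); rewrite mulrC; congr (_ * _).
rewrite -[RHS]mulr1 -(sum_mul_delta (fun=> 1)).
by apply: eq_bigr => t _; rewrite mul1r.
Qed.

Lemma adj_coef_delta_tail s k : (s < k)%N -> adj_coef (delta_seq s) k = conj_step k.
Proof.
move=> hk; rewrite adj_coef_delta hk gtn_eqF //.
by rewrite mul0r add0r mul1r.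
Qed.


Lemma l2_adj_coef_delta s : l2 conj_step -> l2 (adj_coef (delta_seq s)).
Proof. by apply: (l2_eventually_eq (m := s.+1)) => k hk; rewrite adj_coef_delta_tail. Qed.

Lemma adj_dom_delta s : adj_dom q T (delta_seq s) <-> l2 conj_step.
Proof.
rewrite (adj_domP (l2_delta_seq (s := s))); split; last exact: l2_adj_coef_delta.
by apply: (l2_eventually_eq (m := s.+1)) => k hk; rewrite adj_coef_delta_tail.
Qed.

Lemma ip_delta_seq (b : nat -> C) s N : (forall k, (N <= k)%N -> b k = 0) ->
  ip b (delta_seq s) = b s.
Proof.
move=> hb; rewrite (@ip_fin _ _ _ (N + s.+1)); last first.
  by move=> k hk; apply: hb; apply: leq_trans hk; exact: leq_addr.
rewrite (eq_bigr (fun k : 'I_(N + s.+1) => b k * ((k : nat) == s)%:R)).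
  by rewrite sum_mul_delta (ltn_addl N (ltnSn s)) mul1r.
by move=> k _; rewrite /delta_seq rmorph_nat.
Qed.

Definition clos_coef (g : nat -> C) (s : nat) : C :=
  g s * d s + csum (fun j => (d (s + 1 + j)%N - d (s + j)%N) * g (s + 1 + j)%N).

Lemma clos_coef_ip (g : nat -> C) s : l2 g -> l2 conj_step ->
  clos_coef g s = ip g (adj_coef (delta_seq s)).
Proof.
move=> hg hd.
rewrite /ip (csum_shiftn s.+1 (abs_summable_ip hg (l2_adj_coef_delta (s := s) hd))).
congr (_ + _).
  rewrite big_ord_recr /= big1 ?add0r.
    by rewrite adj_coef_delta eqxx ltnn mul0r addr0 mul1r conjCK.
  move=> k _; rewrite adj_coef_delta (ltn_eqF (ltn_ord k)) ltnNge ltnW //=.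
  by rewrite !mul0r add0r rmorph0 mulr0.
congr csum; apply/funext => j.
rewrite adj_coef_delta_tail; last by rewrite addSn ltnS leq_addr.
by rewrite /conj_step rmorphB /= !conjCK addn1 addSn /= mulrC.
Qed.

Lemma clos_rel_coef (g h : nat -> C) : l2 conj_step -> clos_rel q T g h ->
  h = clos_coef g.
Proof.
move=> hd [hg [hh [A [B [hAB [hA hB]]]]]]; apply/funext => s.
apply/eqP; rewrite -subr_eq0; apply/eqP/sqn_small_eq0 => eta heta.
have hv := l2_adj_coef_delta (s := s) hd.
have he4 : 0 < eta / 4 by rewrite divr_gt0.
have [delta hdel hsmall] := ip_small hv he4.
have [n [hn1 hn2]] := filter_ex (filterI (cvg0_eventually_le hA hdel)
                                         (cvg0_eventually_le hB he4)).
have [N [haN hb]] := opgraph_image (hAB n).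
have hBN k : (N <= k)%N -> B n k = 0 by move=> hk; rewrite hb /image_coef tail_sum_ge.
have hAn : l2 (A n) := l2_fin haN.
have hBn : l2 (B n) := l2_fin hBN.
have eB : B n s = ip (A n) (adj_coef (delta_seq s)).
  by rewrite -(ip_delta_seq s hBN) hb ip_image_coef // (@ip_fin _ _ _ N).
have -> : h s - clos_coef g s =
          (h s - B n s) + ip (fun k => A n k - g k) (adj_coef (delta_seq s)).
  by rewrite ipBl // -eB clos_coef_ip //; ring.
apply: le_trans (sqnD_le _ _) _.
have h1 : sqn (h s - B n s) <= eta / 4.
  by rewrite -opprB sqnN; apply: le_trans hn2; exact: sqn_le_l2norm2 s (l2B hBn hh).
have h2 : sqn (ip (fun k => A n k - g k) (adj_coef (delta_seq s))) <= eta / 4.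
  by apply: hsmall => //; exact: l2B.
lra.
Qed.

Lemma clos_coef_step (g : nat -> C) m : l2 g -> l2 conj_step ->
  clos_coef g m - clos_coef g m.+1 = d m * (g m - g m.+1).
Proof.
move=> hg hd.
have hstep : l2 (fun j => d (m + 1 + j)%N - d (m + j)%N).
  have := l2_shiftn (m := (m + 1)%N) (l2_conj hd).
  congr l2; apply/funext => j.
  by rewrite /conj_step rmorphB /= !conjCK [in prevseq _ _]addn1 addSn.
rewrite /clos_coef (csum_shiftn 1 (abs_summable_l2M hstep (l2_shiftn (m := (m + 1)%N) hg))).
rewrite big_ord1 !addn0.
have -> : (fun j => (d (m + 1 + (1 + j))%N - d (m + (1 + j))%N) * g (m + 1 + (1 + j))%N) =
          (fun j => (d (m.+1 + 1 + j)%N - d (m.+1 + j)%N) * g (m.+1 + 1 + j)%N).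
  by apply/funext => j; rewrite !addn1 !add1n !addnS !addSn.
by rewrite !addn1; ring.
Qed.

Definition trunc_seq (f : nat -> C) (N k : nat) : C :=
  if (k <= N)%N then f k - f N.+1 else 0.

Lemma trunc_seq_gt f N k : (N < k)%N -> trunc_seq f N k = 0.
Proof. by move=> hk; rewrite /trunc_seq leqNgt hk. Qed.

Lemma image_coef_trunc (f F : nat -> C) N :
  (forall m, F m - F m.+1 = d m * (f m - f m.+1)) ->
  image_coef (trunc_seq f N) N.+1 = trunc_seq F N.
Proof.
move=> hF; apply/funext => k; rewrite /image_coef.
have [hk|hk] := leqP k N; last by rewrite tail_sum_ge // trunc_seq_gt.
transitivity (tail_sum (fun m => F m - F m.+1) N.+1 k).
  apply: eq_bigr => m _; congr (_ * _); rewrite hF /trunc_seq.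
  have hm : (m <= N)%N by rewrite -ltnS ltn_ord.
  rewrite hm; case: (leqP m.+1 N) => h2; first by congr (_ * _); ring.
  have -> : (m : nat) = N by apply/eqP; rewrite eqn_leq hm -ltnS.
  by rewrite subr0.
by rewrite tail_sum_telescope ?(leqW hk) // /trunc_seq hk.
Qed.

Lemma l2norm2_trunc_le (f : nat -> C) N : l2 f ->
  l2norm2 (fun k => trunc_seq f N k - f k) <=
  N.+1%:R * sqn (f N.+1) + (l2norm2 f - series (fun k => sqn (f k)) N.+1).
Proof.
move=> hf.
have hl : l2 (fun k => trunc_seq f N k - f k).
  by apply: l2B => //; apply: (l2_fin (N := N.+1)) => k hk; rewrite trunc_seq_gt.
apply: l2norm2_le => // n.
set w := fun k => sqn (trunc_seq f N k - f k).
have w0 k : 0 <= w k by exact: sqn_ge0.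
have w_head k : (k <= N)%N -> w k = sqn (f N.+1).
  by move=> hk; rewrite /w /trunc_seq hk addrAC subrr add0r sqnN.
have w_tail k : (N < k)%N -> w k = sqn (f k).
  by move=> hk; rewrite /w /trunc_seq leqNgt hk /= sub0r sqnN.
apply: le_trans (series_nondecreasing w0 (leq_addl N.+1 n)) _.
rewrite series_split; apply: lerD.
  rewrite seriesEord /= (eq_bigr (fun=> sqn (f N.+1))); last first.
    by move=> k _; rewrite w_head // -ltnS.
  by rewrite sumr_const card_ord mulr_natl.
have := series_le_limn (N.+1 + n)%N (fun k => sqn_ge0 (f k)) hf.
rewrite series_split -lerBrDl; apply: le_trans.
rewrite le_eqVlt; apply/orP; left; apply/eqP.
rewrite !seriesEord; apply: eq_bigr => j _; rewrite w_tail //.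
by rewrite addSn ltnS leq_addr.
Qed.

Lemma trunc_seq_cvg (f : nat -> C) (Nf : nat -> nat) : l2 f ->
  (forall n, (n <= Nf n)%N) ->
  (forall n, (Nf n).+1%:R * sqn (f (Nf n).+1) <= n.+1%:R^-1) ->
  (fun n => l2norm2 (fun k => trunc_seq f (Nf n) k - f k)) @ \oo --> 0.
Proof.
move=> hf hN hsmall; set L := l2norm2 f.
have hb : harmonic + ((fun=> L) - series (fun k => sqn (f k))) @ \oo --> (0 : R).
  rewrite -[0 : R](addr0 0) -{2}(subrr L).
  exact: cvgD (@cvg_harmonic R) (cvgB (cvg_cst L) hf).
apply: (squeeze_cvgr _ (cvg_cst (0 : R)) hb).
apply: nearW => n; rewrite !fctE; apply/andP; split.
  apply: l2norm2_ge0; apply: l2B => //.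
  by apply: (l2_fin (N := (Nf n).+1)) => k hk; rewrite trunc_seq_gt.
apply: le_trans (l2norm2_trunc_le (Nf n) hf) _.
apply: lerD; first exact: hsmall.
rewrite lerD2l lerN2; apply: series_nondecreasing; first by move=> k; exact: sqn_ge0.
exact: leqW.
Qed.

Lemma clos_domP (g : nat -> C) : l2 conj_step -> l2 g ->
  clos_dom q T g <-> l2 (clos_coef g).
Proof.
move=> hd hg; split; first by move=> [h H]; rewrite -(clos_rel_coef hd H); case: H => _ [].
move=> hS; exists (clos_coef g); split => //; split => //.
set W := fun k => sqn (g k) + sqn (clos_coef g k).
have W0 k : 0 <= W k by rewrite /W addr_ge0 // sqn_ge0.
have Wb : bounded_series W by apply: bounded_seriesD; apply/l2_bounded.
have [Nf hNf] := choice (tail_index_small W0 Wb).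
exists (fun n => trunc_seq g (Nf n)), (fun n => trunc_seq (clos_coef g) (Nf n)); split.
  move=> n; rewrite -(image_coef_trunc (Nf n) (fun m => clos_coef_step m hg hd)).
  by apply: opgraph_image_coef => k; exact: trunc_seq_gt.
split; apply: trunc_seq_cvg => // n; have [hn h] := hNf n => //; apply: le_trans h.
  by rewrite ler_wpM2l // lerDl sqn_ge0.
by rewrite ler_wpM2l // lerDr sqn_ge0.
Qed.

End Operator.

Unset Implicit Arguments.

Theorem theorem5 (R : realType) (alpha : R) (d : nat -> R[i])
    (T : {linear {poly R[i]} -> {poly R[i]}}) :
  -1 < alpha -> Dtilde d ->
  (forall n, T (laguerre (alpha + 1) n) = d n *: laguerre (alpha + 1) n) ->
  (* (i) *)
  (forall g : nat -> R[i], l2 g ->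
     (adj_dom (laguerre alpha) T g <->
      l2 (fun k => g k * (d k)^* +
                   ((d k)^* - (prevseq d k)^*) * \sum_(t < k) g t))) /\
  (* (ii) *)
  (forall g h : nat -> R[i], adj_rel (laguerre alpha) T g h ->
     h = (fun k => g k * (d k)^* +
                   ((d k)^* - (prevseq d k)^*) * \sum_(t < k) g t)) /\
  (* (iii) *)
  (forall s : nat,
     adj_dom (laguerre alpha) T (fun k => (k == s)%:R) <->
     l2 (fun k => (d k)^* - (prevseq d k)^*)) /\
  (* (iv) *)
  (l2 (fun k => (d k)^* - (prevseq d k)^*) ->
     closable (laguerre alpha) T /\
     (forall g : nat -> R[i], l2 g ->
        (clos_dom (laguerre alpha) T g <->
         l2 (fun s => g s * d s +
              csum (fun j => (d (s + 1 + j)%N - d (s + j)%N) * g (s + 1 + j)%N)))) /\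
     (forall g h : nat -> R[i], clos_rel (laguerre alpha) T g h ->
        h = (fun s => g s * d s +
              csum (fun j => (d (s + 1 + j)%N - d (s + j)%N) * g (s + 1 + j)%N)))).
Proof.
move=> _ _ Tp; split; [|split; [|split]].
- by move=> g; exact: (adj_domP Tp).
- by move=> g h; exact: (adj_rel_coef Tp).
- by move=> s; exact: (adj_dom_delta Tp).
- move=> hd; split; [|split].
  + by move=> g h h' H H'; rewrite (clos_rel_coef Tp hd H) (clos_rel_coef Tp hd H').
  + by move=> g; exact: (clos_domP Tp hd).
  + by move=> g h; exact: (clos_rel_coef Tp hd).
Qed.
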